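(* Under the standing setting and assumptions (A1)–(A3) described in the context, assume $\mathcal R(X)\neq\emptyset$ for all $X\in\mathcal X$ and that for any distinct $X,Y\in\partial\mathcal A$ with $X-Y\in\ker(\pi)$ there exists $\lambda\in(0,1)$ with $\lambda X+(1-\lambda)Y\in\mathrm{int}\,\mathcal A$. Then $|\mathcal R(X)|=1$ for all $X\in\mathcal X$.
   Context: Let $\mathcal X$ be a Hausdorff, first countable, locally convex topological vector space over $\mathbb R$, partially ordered by a partial order $\geq$ with positive cone $\mathcal X_+=\{X\in\mathcal X: X\geq 0\}$. Let $\mathcal M\subset\mathcal X$ be a vector subspace with $1<\dim\mathcal M<\infty$, carrying the relative topology, and let $\pi:\mathcal M\to\mathbb R$ be linear with $\ker(\pi)=\{Z\in\mathcal M:\pi(Z)=0\}$. Standing assumptions: (A1) there is $U\in\mathcal M\cap\mathcal X_+$ with $\pi(U)=1$; (A2) $\mathcal A\subsetneq\mathcal X$ is closed, contains $0$, and satisfies $\mathcal A+\mathcal X_+\subset\mathcal A$; (A3) the map $\rho(X)=\inf\{\pi(Z): Z\in\mathcal M,\ X+Z\in\mathcal A\}$ is finitely valued and continuous on $\mathcal X$. The optimal payoff map is $\mathcal R(X)=\{Z\in\mathcal M: X+Z\in\mathcal A,\ \pi(Z)=\rho(X)\}$; $|\cdot|$ is cardinality. $\partial$ and $\mathrm{int}$ denote boundary and interior in $\mathcal X$. *)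

From HB Require Import structures.
From mathcomp Require Import all_boot all_order all_algebra.
From mathcomp Require Import all_classical all_reals all_analysis.
Set Implicit Arguments. Unset Strict Implicit. Unset Printing Implicit Defensive.
Import Order.TTheory GRing.Theory Num.Theory.
Local Open Scope classical_set_scope.
Local Open Scope ring_scope.

Definition first_countable (T : topologicalType) : Prop :=
  forall x : T, exists B : nat -> set T,
    (forall n, nbhs x (B n)) /\ (forall U, nbhs x U -> exists n, B n `<=` U).

Definition partial_order {T : Type} (ge : T -> T -> Prop) : Prop :=
  (forall x, ge x x) /\ (forall x y, ge x y -> ge y x -> x = y) /\
  (forall x y z, ge x y -> ge y z -> ge x z).

Definition pos_cone {R : numDomainType} {E : lmodType R} (ge : E -> E -> Prop)
  : set E := [set X | ge X 0].

Definition is_subspace {R : numDomainType} {E : lmodType R} (M : set E) : Prop :=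
  M 0 /\ (forall (a : R) x y, M x -> M y -> M (a *: x + y)).

Definition has_dim {R : numDomainType} {E : lmodType R} (M : set E) (n : nat)
  : Prop :=
  exists b : 'I_n -> E,
    (forall i, M (b i)) /\
    (forall c : 'I_n -> R, \sum_(i < n) c i *: b i = 0 -> forall i, c i = 0) /\
    (forall x, M x -> exists c : 'I_n -> R, x = \sum_(i < n) c i *: b i).

(* pi is linear on M (only its restriction to M matters) *)
Definition linear_on {R : numDomainType} {E : lmodType R} (M : set E)
  (pi : E -> R) : Prop :=
  forall (a : R) x y, M x -> M y -> pi (a *: x + y) = a * pi x + pi y.

Definition price_set {R : numDomainType} {E : lmodType R} (M : set E)
  (pi : E -> R) (A : set E) (X : E) : set R :=
  [set pi Z | Z in [set Z | M Z /\ A (X + Z)]].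

Definition rho {R : realType} {E : lmodType R} (M : set E) (pi : E -> R)
  (A : set E) (X : E) : R := inf (price_set M pi A X).

Definition optR {R : realType} {E : lmodType R} (M : set E) (pi : E -> R)
  (A : set E) (X : E) : set E :=
  [set Z | M Z /\ A (X + Z) /\ pi Z = rho M pi A X].

Definition boundary {T : topologicalType} (A : set T) : set T :=
  closure A `\` interior A.

(* If Z is optimal for X, then X + Z lies on the boundary of A: were it
   interior, moving it a little along -U (with pi U = 1) would stay in A and
   lower the price below rho X.  Two distinct optimal Z0, Z1 give boundary
   points X + Z0, X + Z1 whose difference is in ker pi, so by hypothesis some
   convex combination of them is interior; but that combination is X + Z for
   the payoff Z = l Z1 + (1 - l) Z0, which again has price rho X. *)
From HB Require Import structures.
From mathcomp Require Import all_boot all_order all_algebra.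
From mathcomp Require Import all_classical all_reals all_analysis.
From mathcomp Require Import ring.
Set Implicit Arguments. Unset Strict Implicit. Unset Printing Implicit Defensive.
Import Order.TTheory GRing.Theory Num.Theory.
Local Open Scope classical_set_scope.
Local Open Scope ring_scope.

Lemma nbhs_shift_neg (R : realType) (E : tvsType R) (S : set E) (P V : E) :
  nbhs P S -> exists2 t : R, t < 0 & S (P + t *: V).
Proof.
move=> SP.
have := @add_continuous E (P, 0) S; rewrite /= addr0 => /(_ SP).
move=> [[B1 B2] /= [B1P B2_0] B12S].
have := @scale_continuous R E (0, V) B2; rewrite /= scale0r => /(_ B2_0).
move=> [[C1 C2] /= [C1_0 C2V] C12B2].
have : \forall t \near (0 : R)^'-, t < 0 /\ C1 t.
  apply: filterI; [exact: nbhs_left_lt | exact: (cvg_within _ C1_0)].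
move=> /filter_ex[t [t0 C1t]]; exists t => //.
apply: (B12S (P, t *: V)); split; first exact: nbhs_singleton.
by apply: (C12B2 (t, V)); split; last exact: nbhs_singleton.
Qed.

Section linear_on_subspace.
Variables (R : numDomainType) (E : lmodType R) (M : set E) (pi : E -> R).
Hypotheses (M_subspace : is_subspace M) (pi_linear : linear_on M pi).

Lemma subspaceZ a x : M x -> M (a *: x).
Proof.
by move=> Mx; rewrite -[a *: x]addr0; apply: M_subspace.2 => //; exact: M_subspace.1.
Qed.

Lemma subspaceB x y : M x -> M y -> M (x - y).
Proof. by move=> Mx My; rewrite addrC -scaleN1r; exact: M_subspace.2. Qed.

Lemma linear_on0 : pi 0 = 0.
Proof.
have := pi_linear 1 M_subspace.1 M_subspace.1.
by rewrite scale1r addr0 mul1r => pi00; apply: (@addrI _ (pi 0)); rewrite addr0 -pi00.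
Qed.

Lemma linear_onZ a x : M x -> pi (a *: x) = a * pi x.
Proof.
move=> Mx; have := pi_linear a Mx M_subspace.1.
by rewrite addr0 linear_on0 addr0.
Qed.

Lemma linear_onB x y : M x -> M y -> pi (x - y) = pi x - pi y.
Proof.
by move=> Mx My; have := pi_linear (-1) My Mx; rewrite scaleN1r mulN1r !(addrC (- _)).
Qed.

Lemma subspace_lincomb a b x y : M x -> M y -> M (a *: x + b *: y).
Proof. by move=> Mx My; apply: M_subspace.2 => //; exact: subspaceZ. Qed.

Lemma linear_on_lincomb a b x y : M x -> M y ->
  pi (a *: x + b *: y) = a * pi x + b * pi y.
Proof. by move=> Mx My; rewrite pi_linear ?linear_onZ //; exact: subspaceZ. Qed.

End linear_on_subspace.

Section optimal_payoffs.
Variables (R : realType) (E : tvsType R) (M : set E) (pi : E -> R) (A : set E).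
Hypotheses (M_subspace : is_subspace M) (pi_linear : linear_on M pi).
Variable U : E.
Hypotheses (MU : M U) (piU : pi U = 1).

Lemma rho_le_price X Z : has_lbound (price_set M pi A X) ->
  M Z -> A (X + Z) -> rho M pi A X <= pi Z.
Proof. by move=> lbX MZ AXZ; apply: (ge_inf lbX); exists Z. Qed.

Lemma rho_price_not_interior X Z : has_lbound (price_set M pi A X) ->
  M Z -> pi Z = rho M pi A X -> ~ interior A (X + Z).
Proof.
move=> lbX MZ piZ /(nbhs_shift_neg U)[t t_lt0 At].
have MtUZ : M (t *: U + Z) by exact: M_subspace.2.
have AXtUZ : A (X + (t *: U + Z)) by rewrite (addrC (t *: U)) addrA.
have := rho_le_price lbX MtUZ AXtUZ.
by rewrite pi_linear // piU mulr1 piZ lerDr leNgt t_lt0.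
Qed.

Lemma optR_boundary X Z : has_lbound (price_set M pi A X) ->
  optR M pi A X Z -> boundary A (X + Z).
Proof.
move=> lbX [MZ [AXZ piZ]]; split; first exact: subset_closure.
exact: rho_price_not_interior.
Qed.

End optimal_payoffs.

Theorem mainTheorem13 (R : realType) (E : tvsType R)
  (ge : E -> E -> Prop) (M : set E) (pi : E -> R) (A : set E)
  (hE : hausdorff_space E) (fcE : first_countable E)
  (hge : partial_order ge)
  (hM : is_subspace M) (hdim : exists n, (1 < n)%N /\ has_dim M n)
  (hpi : linear_on M pi)
  (A1 : exists U, M U /\ pos_cone ge U /\ pi U = 1)
  (A2_closed : closed A) (A2_0 : A 0) (A2_ne : A <> setT)
  (A2_mono : forall a p, A a -> pos_cone ge p -> A (a + p))
  (A3_fin : forall X, price_set M pi A X !=set0 /\ has_lbound (price_set M pi A X))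
  (A3_cont : continuous (fun X : E => (rho M pi A X : R^o)))
  (hR : forall X, optR M pi A X !=set0)
  (hstrict : forall X Y, X <> Y -> boundary A X -> boundary A Y ->
     M (X - Y) -> pi (X - Y) = 0 ->
     exists l : R, 0 < l < 1 /\ interior A (l *: X + (1 - l) *: Y)) :
  forall X, exists Z, optR M pi A X = [set Z].
Proof.
move=> X; have [U [MU [_ piU]]] := A1.
have bdry := optR_boundary hM hpi MU piU (A3_fin X).2.
have [Z0 optZ0] := hR X; exists Z0.
apply/seteqP; split => [Z1 optZ1|_ ->] //=.
apply: contrapT => Z10; have [[MZ0 [_ piZ0]] [MZ1 [_ piZ1]]] := (optZ0, optZ1).
have shiftB : X + Z1 - (X + Z0) = Z1 - Z0 by rewrite opprD addrACA subrr add0r.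
have [||l [_]] := hstrict (X + Z1) (X + Z0)
  (fun eqXZ => Z10 (addrI X eqXZ)) (bdry _ optZ1) (bdry _ optZ0).
- by rewrite shiftB; exact: (subspaceB hM).
- by rewrite shiftB (linear_onB hpi) // piZ0 piZ1 subrr.
set Z := l *: Z1 + (1 - l) *: Z0.
have -> : l *: (X + Z1) + (1 - l) *: (X + Z0) = X + Z.
  by rewrite !scalerDr addrACA -scalerDl [l + _]addrC subrK scale1r.
apply: (rho_price_not_interior hM hpi MU piU (A3_fin X).2).
  exact: (subspace_lincomb hM).
by rewrite (linear_on_lincomb hM hpi) // piZ0 piZ1; ring.
Qed.
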